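(* Let $V,H,K$ be complex Hilbert spaces such that $V$ is embedded in $H$ with compact inclusion map $i\colon V\to H$, and let $j\colon V\to K$ be a compact linear map. Let $\mathfrak a\colon V\times V\to\mathbb C$ be a positive, symmetric, continuous, $i$-elliptic sesquilinear form, and put $V_D=\ker j$. Let $A^N$ be the self-adjoint operator in $\overline V$ (closure in $H$) associated with $\mathfrak a$, and $A^D$ the self-adjoint operator in $\overline{V_D}$ (closure in $H$) associated with $\mathfrak a|_{V_D\times V_D}$. For $\lambda\in\mathbb R$ let $\mathfrak b_\lambda(u,v)=\mathfrak a(u,v)-\lambda (u,v)_H$ and let $\mathcal N_\lambda$ be the graph associated with $(\mathfrak b_\lambda,j)$. Suppose (I) $A^N$ has no eigenvector belonging to $V_D$, and (II) for every $\lambda\in(0,\infty)$, $\dim\operatorname{span}\{\varphi\in D(\mathcal N_\lambda): (\mathcal N_\lambda^\circ\varphi,\varphi)_K=0\}=\infty$. Let $\lambda_1^N\le\lambda_2^N\le\dots$ and $\lambda_1^D\le\lambda_2^D\le\dots$ be the eigenvalues of $A^N$ and $A^D$, repeated with multiplicity. Then $\lambda^N_{n+1}<\lambda^D_n$ for all $n\in\mathbb N$.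
   Context: A sesquilinear form $\mathfrak a$ on $V$ is positive if $\mathfrak a(u,u)\ge 0$ for all $u$, symmetric if $\mathfrak a(v,u)=\overline{\mathfrak a(u,v)}$, continuous if $|\mathfrak a(u,v)|\le M\|u\|_V\|v\|_V$ for some $M$, and $i$-elliptic if there are $\omega,\delta>0$ with $\mathfrak a(u,u)+\omega\|i(u)\|_H^2\ge\delta\|u\|_V^2$ for all $u\in V$. For a closed subspace $W\subset V$ and a continuous symmetric $i$-elliptic form $\mathfrak c$ on $W$, the self-adjoint operator in $\overline W$ (closure in $H$) associated with $\mathfrak c$ is defined by: $u\in D(B)$ and $Bu=f$ iff $u\in W$, $f\in\overline W$ and $\mathfrak c(u,v)=(f,v)_H$ for all $v\in W$; it is self-adjoint, bounded below, with compact resolvent (since $i$ is compact). The graph associated with $(\mathfrak b_\lambda,j)$ is $\mathcal N_\lambda=\{(j(u),\psi)\in K\times K: u\in V,\ \mathfrak b_\lambda(u,v)=(\psi,j(v))_K \text{ for all } v\in V\}$; it is a self-adjoint graph (linear relation) in $K$, bounded below, with compact resolvent. Its domain is $D(\mathcal N_\lambda)=\{\varphi: \exists\psi,\ (\varphi,\psi)\in\mathcal N_\lambda\}$, and its single-valued part $\mathcal N_\lambda^\circ$ is the self-adjoint operator in the Hilbert space $\overline{D(\mathcal N_\lambda)}$ (closure in $K$) whose graph is $\mathcal N_\lambda\cap(\overline{D(\mathcal N_\lambda)}\times\overline{D(\mathcal N_\lambda)})$; $D(\mathcal N_\lambda^\circ)=D(\mathcal N_\lambda)$. *)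

From HB Require Import structures.
From mathcomp Require Import all_boot all_order all_algebra.
From mathcomp Require Import reals.
From mathcomp.real_closed Require Import complex.
Set Implicit Arguments. Unset Strict Implicit. Unset Printing Implicit Defensive.
Import Order.TTheory GRing.Theory Num.Theory.
Local Open Scope ring_scope.

Section Hilbert.
Variable R : realType.
Local Notation C := (R[i]).

Definition cR (x : R) : C := Complex x 0.
Definition cconj (z : C) : C := conjc z.

Section Space.
Variable (V : lmodType C) (ip : V -> V -> C).

Definition is_inner_product : Prop :=
  [/\ forall (c : C) (x y z : V), ip (c *: x + y) z = c * ip x z + ip y z,
      forall x y : V, ip y x = cconj (ip x y),
      forall x : V, 0 <= ip x x
    & forall x : V, ip x x = 0 -> x = 0].

Definition hnorm (x : V) : R := Num.sqrt (complex.Re (ip x x)).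

Definition hconverges (u : nat -> V) (l : V) : Prop :=
  forall e : R, 0 < e -> exists N, forall n, (N <= n)%N -> hnorm (u n - l) < e.

Definition hcauchy (u : nat -> V) : Prop :=
  forall e : R, 0 < e -> exists N, forall n m, (N <= n)%N -> (N <= m)%N ->
    hnorm (u n - u m) < e.

Definition hbounded (u : nat -> V) : Prop :=
  exists M : R, forall n, hnorm (u n) <= M.

Definition is_hilbert : Prop :=
  is_inner_product /\ forall u, hcauchy u -> exists l, hconverges u l.

Definition hclosure (S : V -> Prop) (x : V) : Prop :=
  exists u : nat -> V, (forall n, S (u n)) /\ hconverges u x.

Definition lin_indep (n : nat) (x : 'I_n -> V) : Prop :=
  forall c : 'I_n -> C, \sum_(k < n) c k *: x k = 0 -> forall k, c k = 0.

Definition hspan (S : V -> Prop) (x : V) : Prop :=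
  exists n (c : 'I_n -> C) (y : 'I_n -> V),
    (forall k, S (y k)) /\ x = \sum_(k < n) c k *: y k.

Definition infinite_dim (S : V -> Prop) : Prop :=
  forall n, exists x : 'I_n -> V, lin_indep x /\ forall k, S (x k).

End Space.

Definition compact_map (V W : lmodType C) (ipV : V -> V -> C) (ipW : W -> W -> C)
  (f : V -> W) : Prop :=
  forall u : nat -> V, hbounded ipV u ->
    exists (phi : nat -> nat) (l : W), (forall n, (phi n < phi n.+1)%N) /\
      hconverges ipW (fun n => f (u (phi n))) l.

Section Forms.
Variables (V H : lmodType C) (ipV : V -> V -> C) (ipH : H -> H -> C) (i : V -> H).

Definition sesquilinear (a : V -> V -> C) : Prop :=
  (forall (c : C) u w v, a (c *: u + w) v = c * a u v + a w v) /\
  (forall (c : C) u v w, a u (c *: v + w) = cconj c * a u v + a u w).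

Definition form_positive (a : V -> V -> C) : Prop := forall u, 0 <= a u u.
Definition form_symmetric (a : V -> V -> C) : Prop :=
  forall u v, a v u = cconj (a u v).
Definition form_continuous (a : V -> V -> C) : Prop :=
  exists M : R, forall u v, Normc.normc (a u v) <= M * hnorm ipV u * hnorm ipV v.
Definition form_elliptic (a : V -> V -> C) : Prop :=
  exists omega delta : R, 0 < omega /\ 0 < delta /\
    forall u, cR (delta * hnorm ipV u ^+ 2) <= a u u + cR (omega * hnorm ipH (i u) ^+ 2).

(* The operator in the closure (in H) of i(W) associated with the form c on the
   subspace W of V (V identified with its image i(V) in H), as a relation:
   assoc_op W c g f  <->  g \in D(B) and B g = f. *)
Definition assoc_op (W : V -> Prop) (c : V -> V -> C) (g f : H) : Prop :=
  exists u, [/\ W u, g = i u,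
               hclosure ipH (fun h => exists w, W w /\ h = i w) f
             & forall v, W v -> c u v = ipH f (i v)].

(* eig_le B n mu : B has at least n linearly independent eigenvectors with
   (real) eigenvalues <= mu, i.e. lambda_n <= mu (eigenvalues repeated with
   multiplicity, 1-indexed) *)
Definition eig_le (B : H -> H -> Prop) (n : nat) (mu : R) : Prop :=
  exists x : 'I_n -> H, lin_indep x /\
    forall k, exists nu : R, nu <= mu /\ B (x k) (cR nu *: x k).

(* nth_eig B n mu : mu is the n-th eigenvalue (1-indexed, counted with
   multiplicity, in nondecreasing order) of B *)
Definition nth_eig (B : H -> H -> Prop) (n : nat) (mu : R) : Prop :=
  eig_le B n mu /\ forall mu', mu' < mu -> ~ eig_le B n mu'.
End Forms.

Section DtN.
Variables (V H K : lmodType C) (ipH : H -> H -> C) (ipK : K -> K -> C)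
  (i : V -> H) (j : V -> K) (a : V -> V -> C).

Definition bform (lam : R) (u v : V) : C := a u v - cR lam * ipH (i u) (i v).

Definition Ngraph (lam : R) (phi psi : K) : Prop :=
  exists u, phi = j u /\ forall v, bform lam u v = ipK psi (j v).

Definition Ndom (lam : R) (phi : K) : Prop := exists psi, Ngraph lam phi psi.

(* single-valued part: phi |-> the psi in the closure of D(N) with (phi,psi) in N *)
Definition Nop (lam : R) (phi psi : K) : Prop :=
  Ngraph lam phi psi /\ hclosure ipK (Ndom lam) psi.

Definition Nzero (lam : R) (phi : K) : Prop :=
  Ndom lam phi /\ exists psi, Nop lam phi psi /\ ipK psi phi = 0.
End DtN.
End Hilbert.

(* Let [e_0, e_1, ...] minimize successively the Rayleigh quotient [a(u,u)/|u|_H^2]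
   on the H-orthogonal complement of the previous ones.  Ellipticity of [a]
   and compactness of [i] make the minimizers exist; they are eigenvectors of
   A^N and [a(e_n,e_n)] is the (n+1)-th eigenvalue of A^N.
   For the strict inequality let [lam] be the n-th eigenvalue of A^D and suppose
   [lam <= a(e_n,e_n)].  A vector [phi] with [(N_lam phi, phi) = 0] is [j u] for a
   [u] that is b_lam-null and b_lam-orthogonal to V_D; adding [u] to the span
   of the first n eigenvectors of A^D and imposing orthogonality to
   [e_0 .. e_(n-1)] yields a vector of Rayleigh quotient <= [lam], hence an
   eigenvector of A^N for [lam] that by (I) is not in V_D.  By (II) this
   eigenspace is infinite dimensional, so [a(e_k,e_k) <= lam] for every [k],
   which is impossible for an H-orthonormal sequence when [i] is compact.
   (I) also gives [lam > 0], which (II) needs. *)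

From mathcomp Require Import all_boot all_order all_algebra.
From mathcomp Require Import reals.
From mathcomp.real_closed Require Import complex.
From mathcomp Require Import boolp classical_sets.
From mathcomp Require Import ring lra.
Import Order.TTheory GRing.Theory Num.Theory.
Local Open Scope ring_scope.
Set Implicit Arguments. Unset Strict Implicit.

Section ComplexScalars.
Variable R : realType.
Local Notation C := (R[i]).
Local Notation Re := (@complex.Re R).
Local Notation Im := (@complex.Im R).
Implicit Types x y : C.

Lemma cReM x y : Re (x * y) = Re x * Re y - Im x * Im y.
Proof. by case: x => a b; case: y => c d. Qed.

Lemma cImM x y : Im (x * y) = Re x * Im y + Im x * Re y.
Proof. by case: x => a b; case: y => c d /=; rewrite addrC. Qed.

Lemma cReD x y : Re (x + y) = Re x + Re y.
Proof. by case: x => a b; case: y => c d. Qed.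

Lemma cReN x : Re (- x) = - Re x. Proof. by case: x. Qed.

Lemma cImN x : Im (- x) = - Im x. Proof. by case: x. Qed.

Lemma cReB x y : Re (x - y) = Re x - Re y. Proof. by rewrite cReD cReN. Qed.

Lemma cReJ x : Re (cconj x) = Re x. Proof. by case: x. Qed.

Lemma cImJ x : Im (cconj x) = - Im x. Proof. by case: x. Qed.

Lemma complex_ext x y : Re x = Re y -> Im x = Im y -> x = y.
Proof. by case: x => a b; case: y => c d /= -> ->. Qed.

Lemma ReMcR (t : R) x : Re (cR t * x) = t * Re x.
Proof. by rewrite cReM /= mul0r subr0. Qed.

Lemma cconjD x y : cconj (x + y) = cconj x + cconj y. Proof. exact: rmorphD. Qed.

Lemma cconjN x : cconj (- x) = - cconj x. Proof. exact: rmorphN. Qed.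

Lemma cconjM x y : cconj (x * y) = cconj x * cconj y. Proof. exact: rmorphM. Qed.

Lemma cconj0 : cconj (0 : C) = 0. Proof. exact: rmorph0. Qed.

Lemma cconj1 : cconj (1 : C) = 1. Proof. exact: rmorph1. Qed.

Lemma cconjR (t : R) : cconj (cR t) = cR t. Proof. exact: conjc_real. Qed.

Lemma cRD (s t : R) : cR (s + t) = cR s + cR t.
Proof. exact: (rmorphD (real_complex R)). Qed.

Lemma cRN (t : R) : cR (- t) = - cR t.
Proof. exact: (rmorphN (real_complex R)). Qed.

Lemma cRM (s t : R) : cR (s * t) = cR s * cR t.
Proof. exact: (rmorphM (real_complex R)). Qed.

Lemma cR_inj : injective (@cR R). Proof. by move=> s t []. Qed.

Lemma mulcJ x : x * cconj x = cR (Re x ^+ 2 + Im x ^+ 2).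
Proof. by apply: complex_ext; rewrite ?cReM ?cImM ?cReJ ?cImJ /=; ring. Qed.

Lemma lec_Re x y : x <= y -> Re x <= Re y.
Proof. by rewrite lecE => /andP []. Qed.

Lemma Re_le_normc x : Re x <= Normc.normc x.
Proof.
case: x => a b /=; have [a_le0|a_gt0] := lerP a 0.
  exact: le_trans a_le0 (sqrtr_ge0 _).
rewrite -(@ler_pXn2r _ 2) ?nnegrE ?sqrtr_ge0 //; last exact: ltW.
by rewrite sqr_sqrtr ?addr_ge0 ?sqr_ge0 // lerDl sqr_ge0.
Qed.
End ComplexScalars.

Section SmallQuantities.
Variable R : realType.

Lemma small_le0 (x : R) : (forall e, 0 < e -> x <= e) -> x <= 0.
Proof. by move=> small; apply/ler_addgt0Pr => e /small; rewrite add0r. Qed.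

Lemma small_norm_eq0 (x : R) : (forall e, 0 < e -> `|x| <= e) -> x = 0.
Proof. by move=> small; apply/eqP; rewrite -normr_le0; apply: small_le0. Qed.

Lemma small_complex_eq0 (z : R[i]) :
  (forall e, 0 < e -> `|complex.Re z| <= e /\ `|complex.Im z| <= e) -> z = 0.
Proof.
by move=> small; apply: complex_ext; apply: small_norm_eq0 => e /small [].
Qed.

Lemma invSn_le (m n : nat) : (m <= n)%N -> (n.+1%:R : R)^-1 <= (m.+1%:R)^-1.
Proof. by move=> le_mn; rewrite lef_pV2 ?posrE ?ltr0Sn // ler_nat. Qed.

Lemma invSn_small (e : R) : 0 < e ->
  exists N : nat, forall n, (N <= n)%N -> (n.+1%:R : R)^-1 < e.
Proof.
move=> e_gt0; exists (Num.truncn e^-1) => n le_Nn.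
rewrite -[e]invrK ltf_pV2 ?posrE ?invr_gt0 ?ltr0Sn //.
by apply: lt_le_trans (truncnS_gt _) _; rewrite ler_nat.
Qed.
End SmallQuantities.

Lemma leq_incr (phi : nat -> nat) :
  (forall n, (phi n < phi n.+1)%N) -> forall n, (n <= phi n)%N.
Proof. by move=> incr; elim=> // n IH; exact: leq_ltn_trans IH (incr n). Qed.

Section Subspace.
Variable R : realType.
Variable V : lmodType R[i].

Definition subspace (W : V -> Prop) :=
  W 0 /\ forall (c : R[i]) x y, W x -> W y -> W (c *: x + y).

Lemma subspaceI (W1 W2 : V -> Prop) :
  subspace W1 -> subspace W2 -> subspace (fun x => W1 x /\ W2 x).
Proof.
move=> [W1_0 W1_lin] [W2_0 W2_lin]; split=> // c x y [W1x W2x] [W1y W2y].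
by split; [exact: W1_lin | exact: W2_lin].
Qed.

Variables (W : V -> Prop) (W_sub : subspace W).

Lemma subspaceZ c x : W x -> W (c *: x).
Proof. by move=> Wx; rewrite -[_ *: _]addr0; apply: (proj2 W_sub) Wx (proj1 W_sub). Qed.

Lemma subspaceD x y : W x -> W y -> W (x + y).
Proof. by move=> Wx Wy; rewrite -[x]scale1r; apply: (proj2 W_sub). Qed.

Lemma subspaceN x : W x -> W (- x).
Proof. by rewrite -scaleN1r; apply: subspaceZ. Qed.

Lemma subspace_sum m (c : 'I_m -> R[i]) (x : 'I_m -> V) :
  (forall p, W (x p)) -> W (\sum_(p < m) c p *: x p).
Proof.
by move=> Wx; elim/big_rec: _ => [|p y _ Wy]; [case: W_sub | exact: (proj2 W_sub)].
Qed.
End Subspace.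

Section LinearIndependence.
Variable R : realType.
Variables (V W : lmodType R[i]).

Lemma lin_indep_neq0 m (x : 'I_m -> W) k : lin_indep x -> x k <> 0.
Proof.
move=> x_indep xk0; have := x_indep (fun p => (p == k)%:R).
rewrite (bigD1 k) //= eqxx scale1r xk0 add0r big1 => [/(_ erefl k)|p /negPf ->].
  by rewrite eqxx; apply/eqP; rewrite oner_eq0.
by rewrite scale0r.
Qed.

Lemma lin_indep_preimage (g : {linear V -> W}) m (x : 'I_m -> W) (u : 'I_m -> V) :
  (forall k, x k = g (u k)) -> lin_indep x -> lin_indep u.
Proof.
move=> xE x_indep c sum0; apply: x_indep.
rewrite (eq_bigr (fun p => g (c p *: u p))) => [|p _]; last by rewrite linearZ xE.
by rewrite -linear_sum sum0 linear0.
Qed.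
Lemma infinite_dim_preimage (g : {linear V -> W}) (S : W -> Prop) (P : V -> Prop) :
  subspace P -> (forall y, S y -> exists2 z, P z & y = g z) ->
  infinite_dim (hspan S) ->
  forall m, exists x : 'I_m -> V, lin_indep x /\ forall k, P (x k).
Proof.
move=> P_sub pre inf m; have [y [y_indep y_span]] := inf m.
have /fin_all_exists [z zP] : forall k, exists z, P z /\ y k = g z.
  move=> k; have [n [c [yy [yyS ->]]]] := y_span k.
  have /fin_all_exists [zz zzP] : forall q, exists z, P z /\ yy q = g z.
    by move=> q; have [z Pz yyE] := pre _ (yyS q); exists z.
  exists (\sum_(q < n) c q *: zz q); split.
    by apply: subspace_sum => // q; case: (zzP q).
  by rewrite linear_sum; apply: eq_bigr => q _; rewrite linearZ; case: (zzP q) => _ ->.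
exists z; split; last by move=> k; case: (zP k).
by apply: (lin_indep_preimage (g := g) _ y_indep) => k; case: (zP k).
Qed.
End LinearIndependence.

Section HermitianForm.
Variable R : realType.
Local Notation C := (R[i]).
Local Notation Re := (@complex.Re R).
Local Notation Im := (@complex.Im R).
Variable V : lmodType C.

Definition hermitian_form (s : V -> V -> C) : Prop :=
  (forall (c : C) (x y z : V), s (c *: x + y) z = c * s x z + s y z) /\
  (forall x y : V, s y x = cconj (s x y)).

Variables (s : V -> V -> C) (s_herm : hermitian_form s).
Let s_linear := proj1 s_herm.
Let s_conj := proj2 s_herm.

Definition qform x := Re (s x x).

Lemma herm_antilinear (c : C) x y z : s z (c *: x + y) = cconj c * s z x + s z y.
Proof. by rewrite s_conj s_linear cconjD cconjM -!s_conj. Qed.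

Lemma herm0l y : s 0 y = 0.
Proof.
have := s_linear 1 0 0 y; rewrite scaler0 addr0 mul1r => s0_double.
by apply: (addrI (s 0 y)); rewrite addr0 -s0_double.
Qed.

Lemma herm0r y : s y 0 = 0. Proof. by rewrite s_conj herm0l cconj0. Qed.

Lemma hermDl x y z : s (x + y) z = s x z + s y z.
Proof. by have := s_linear 1 x y z; rewrite scale1r mul1r. Qed.

Lemma hermDr x y z : s z (x + y) = s z x + s z y.
Proof. by have := herm_antilinear 1 x y z; rewrite scale1r cconj1 mul1r. Qed.

Lemma hermZl c x z : s (c *: x) z = c * s x z.
Proof. by rewrite -[c *: x]addr0 s_linear herm0l addr0. Qed.

Lemma hermZr c x z : s z (c *: x) = cconj c * s z x.
Proof. by rewrite -[c *: x]addr0 herm_antilinear herm0r addr0. Qed.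

Lemma hermNl x z : s (- x) z = - s x z.
Proof. by rewrite -scaleN1r hermZl mulN1r. Qed.

Lemma hermNr x z : s z (- x) = - s z x.
Proof. by rewrite -scaleN1r hermZr cconjN cconj1 mulN1r. Qed.

Lemma hermBl x y z : s (x - y) z = s x z - s y z.
Proof. by rewrite hermDl hermNl. Qed.

Lemma hermBr x y z : s z (x - y) = s z x - s z y.
Proof. by rewrite hermDr hermNr. Qed.

Lemma herm_suml n (c : 'I_n -> C) (x : 'I_n -> V) y :
  s (\sum_(k < n) c k *: x k) y = \sum_(k < n) c k * s (x k) y.
Proof.
by elim/big_rec2: _ => [|k a b _ IH]; [rewrite herm0l | rewrite s_linear IH].
Qed.

Lemma herm_sumr n (c : 'I_n -> C) (x : 'I_n -> V) y :
  s y (\sum_(k < n) c k *: x k) = \sum_(k < n) cconj (c k) * s y (x k).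
Proof.
by elim/big_rec2: _ => [|k a b _ IH]; [rewrite herm0r | rewrite herm_antilinear IH].
Qed.

Lemma herm_diag_real x : s x x = cR (qform x).
Proof.
apply: complex_ext => //=; apply/eqP; have := congr1 Im (s_conj x x).
by rewrite cImJ => /eqP; rewrite -subr_eq0 opprK -mulr2n mulrn_eq0.
Qed.

Lemma Re_hermC x y : Re (s y x) = Re (s x y).
Proof. by rewrite s_conj cReJ. Qed.

Lemma qformD x y : qform (x + y) = qform x + qform y + 2 * Re (s x y).
Proof. by rewrite /qform hermDl !hermDr !cReD (Re_hermC y x); ring. Qed.

Lemma qformB x y : qform (x - y) = qform x + qform y - 2 * Re (s x y).
Proof. by rewrite /qform hermBl !hermBr !cReB (Re_hermC y x); ring. Qed.

Lemma qformZ (c : C) x : qform (c *: x) = (Re c ^+ 2 + Im c ^+ 2) * qform x.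
Proof. by rewrite /qform hermZl hermZr mulrA mulcJ ReMcR. Qed.

Lemma qformZR (t : R) x : qform (cR t *: x) = t ^+ 2 * qform x.
Proof. by rewrite qformZ /= expr0n addr0. Qed.

Lemma qformN x : qform (- x) = qform x.
Proof. by rewrite /qform hermNl hermNr opprK. Qed.

Lemma qform0 : qform 0 = 0. Proof. by rewrite /qform herm0l. Qed.

Lemma qform_parallelogram x y :
  qform (x + y) + qform (x - y) = 2 * qform x + 2 * qform y.
Proof. by rewrite qformD qformB; ring. Qed.

Lemma qform_normalize (q : R) x : 0 < q ->
  qform (cR (Num.sqrt q)^-1 *: x) = qform x / q.
Proof. by move=> q_gt0; rewrite qformZR exprVn sqr_sqrtr ?ltW // mulrC. Qed.

(* Expanding [0 <= qform (t x - y)]: an AM-GM bound on the cross term. *)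
Lemma Re_form_le (t : R) x y : 0 < t -> 0 <= qform (cR t *: x - y) ->
  2 * Re (s x y) <= t * qform x + qform y / t.
Proof.
move=> t_gt0; rewrite qformB qformZR hermZl ReMcR.
have -> : qform y = t * (qform y / t) by rewrite mulrC divfK ?gt_eqF.
move: (qform y / t) => u ge0; rewrite -(@ler_pM2l _ t) // (mulrC t u) mulfK ?gt_eqF //.
nra.
Qed.

(* Cauchy-Schwarz in disguise: let [t] tend to 0 in [Re_form_le]. *)
Lemma psd_null_orth (W : V -> Prop) w : subspace W ->
  (forall y, W y -> 0 <= qform y) -> W w -> qform w = 0 ->
  forall y, W y -> s y w = 0.
Proof.
move=> W_sub psd Ww qw0.
have Re_le0 y : W y -> Re (s y w) <= 0.
  move=> Wy; apply: small_le0 => e e_gt0; have qy_ge0 := psd y Wy.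
  pose t := 2 * e / (qform y + 1).
  have t_gt0 : 0 < t by rewrite divr_gt0 ?mulr_gt0 // ltr_pwDr.
  have := Re_form_le t_gt0 (psd _ ((proj2 W_sub) _ _ _ Wy (subspaceN W_sub Ww))).
  rewrite qw0 mul0r addr0.
  have : t * qform y <= 2 * e by rewrite /t mulrAC ler_pdivrMr ?ltr_pwDr //; nra.
  lra.
move=> y Wy; apply: complex_ext => /=; apply/eqP; rewrite eq_le.
  by rewrite Re_le0 //= -oppr_le0 -cReN -hermNl; apply: Re_le0; apply: subspaceN.
have := Re_le0 _ (subspaceZ W_sub 'i%C Wy).
have := Re_le0 _ (subspaceN W_sub (subspaceZ W_sub 'i%C Wy)).
rewrite hermNl hermZl cReN cReM /= !mul0r !sub0r !mul1r opprK => ? ?.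
by apply/andP; split; lra.
Qed.
End HermitianForm.

Section InnerProduct.
Variable R : realType.
Local Notation C := (R[i]).
Variables (V : lmodType C) (ip : V -> V -> C).
Hypothesis ip_inner : is_inner_product ip.

Lemma ip_hermitian : hermitian_form ip.
Proof. by case: ip_inner. Qed.

Lemma qform_ip_ge0 x : 0 <= qform ip x.
Proof. by case: ip_inner => _ _ ge0 _; exact: lec_Re (ge0 x). Qed.

Lemma qform_ip_eq0 x : qform ip x = 0 -> x = 0.
Proof.
by case: ip_inner => _ _ _ def q0; apply: def; rewrite (herm_diag_real ip_hermitian) q0.
Qed.

Lemma hnorm_sqr x : hnorm ip x ^+ 2 = qform ip x.
Proof. by rewrite sqr_sqrtr // qform_ip_ge0. Qed.

Lemma qform_lt_sqr x r : 0 < r -> hnorm ip x < r -> qform ip x < r ^+ 2.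
Proof.
by move=> r_gt0 lt_xr; rewrite -hnorm_sqr ltr_pXn2r ?nnegrE ?sqrtr_ge0 ?ltW.
Qed.

Lemma hnorm_lt_sqr x r : 0 < r -> qform ip x < r ^+ 2 -> hnorm ip x < r.
Proof.
by move=> r_gt0; rewrite -hnorm_sqr ltr_pXn2r ?nnegrE ?sqrtr_ge0 ?ltW.
Qed.

Lemma qformD_le x y : qform ip (x + y) <= 2 * qform ip x + 2 * qform ip y.
Proof.
have := qform_parallelogram ip_hermitian x y; have := qform_ip_ge0 (x - y).
lra.
Qed.

Lemma qformB_le x y : qform ip (x - y) <= 2 * qform ip x + 2 * qform ip y.
Proof. by have := qformD_le x (- y); rewrite (qformN ip_hermitian). Qed.

Lemma hconverges_qform u l : hconverges ip u l ->
  forall eta, 0 < eta -> exists N, forall n, (N <= n)%N -> qform ip (u n - l) < eta.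
Proof.
move=> cvg eta eta_gt0; pose e := Num.min 1 eta.
have e_gt0 : 0 < e by rewrite lt_min ltr01 eta_gt0.
have e_le1 : e <= 1 by rewrite ge_min lexx.
have e_le_eta : e <= eta by rewrite ge_min lexx orbT.
have [N closeN] := cvg e e_gt0; exists N => n /closeN /(qform_lt_sqr e_gt0).
by move/lt_le_trans; apply; nra.
Qed.
End InnerProduct.

Section DominatedForm.
Variable R : realType.
Local Notation C := (R[i]).
Local Notation Re := (@complex.Re R).
Local Notation Im := (@complex.Im R).
Variables (V : lmodType C) (ip : V -> V -> C).
Hypothesis ip_inner : is_inner_product ip.
Variable (s : V -> V -> C).
Hypothesis s_herm : hermitian_form s.
Hypothesis s_pos : forall x, 0 <= qform s x.
Variable M : R.
Hypothesis M_gt0 : 0 < M.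
Hypothesis s_dominated : forall x, qform s x <= M * qform ip x.

Lemma Re_form_small g e : 0 < e -> exists2 eta, 0 < eta &
  forall d, qform ip d < eta -> Re (s g d) <= e.
Proof.
move=> e_gt0; have qg_ge0 := s_pos g.
pose t := e / (qform s g + 1).
have t_gt0 : 0 < t by rewrite divr_gt0 // ltr_pwDr.
exists (e * t / M) => [|d]; first by rewrite !divr_gt0 // mulr_gt0.
rewrite ltr_pdivlMr // => small_d.
have := Re_form_le s_herm t_gt0 (s_pos (cR t *: g - d)).
have : t * qform s g <= e by rewrite /t mulrAC ler_pdivrMr ?ltr_pwDr //; nra.
have : qform s d / t <= e.
  by rewrite ler_pdivrMr //; apply: le_trans (s_dominated d) _; nra.
lra.
Qed.

Lemma form_small g e : 0 < e -> exists2 eta, 0 < eta &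
  forall d, qform ip d < eta -> `|Re (s g d)| <= e /\ `|Im (s g d)| <= e.
Proof.
move=> e_gt0; have [eta eta_gt0 small] := Re_form_small g e_gt0.
exists eta => // d small_d.
have qN x : qform ip (- x) = qform ip x := qformN (ip_hermitian ip_inner) x.
have small_id : qform ip ('i%C *: d) < eta.
  by rewrite (qformZ (ip_hermitian ip_inner)) /= expr0n expr1n add0r mul1r.
have := small _ small_d; have := small (- d); rewrite qN => /(_ small_d).
have := small _ small_id; have := small (- ('i%C *: d)); rewrite qN => /(_ small_id).
rewrite !(hermNr s_herm) !(hermZr s_herm) !cReN !cReM /=.
rewrite !mul0r !mulN1r !sub0r !opprK => h1 h2 h3 h4.
by split; rewrite ler_norml; apply/andP; split; lra.
Qed.

Lemma form_cvg_eq0 u l g : hconverges ip u l -> (forall n, s (u n) g = 0) -> s l g = 0.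
Proof.
move=> cvg u_orth; apply: small_complex_eq0 => e e_gt0.
have [eta eta_gt0 small] := form_small g e_gt0.
have [N closeN] := hconverges_qform ip_inner cvg eta_gt0.
have -> : s l g = - cconj (s g (u N - l)).
  by rewrite -(proj2 s_herm) (hermBl s_herm) u_orth sub0r opprK.
by rewrite cReN cImN cReJ cImJ !normrN; apply: small; apply: closeN.
Qed.

Lemma qform_cvg u l : hconverges ip u l -> forall e, 0 < e ->
  exists N, forall n, (N <= n)%N -> `|qform s (u n) - qform s l| <= e.
Proof.
move=> cvg e e_gt0; have e3_gt0 : 0 < e / 3 by rewrite divr_gt0.
have [eta eta_gt0 small] := form_small l e3_gt0.
have [N1 close1] := hconverges_qform ip_inner cvg eta_gt0.
have [N2 close2] := hconverges_qform ip_inner cvg (divr_gt0 e3_gt0 M_gt0).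
exists (maxn N1 N2) => n; rewrite geq_max => /andP [le_N1n le_N2n].
have [small_Re _] := small _ (close1 n le_N1n).
have := close2 n le_N2n; rewrite ltr_pdivlMr // => small_q.
have := s_dominated (u n - l); have := s_pos (u n - l).
have -> : qform s (u n) = qform s l + qform s (u n - l) + 2 * Re (s l (u n - l)).
  by rewrite -(qformD s_herm) addrC subrK.
move: small_Re; rewrite !ler_norml => /andP [? ?] ? ?.
by apply/andP; split; nra.
Qed.
End DominatedForm.

Section Setting.
Variable R : realType.
Local Notation C := (R[i]).
Variables (V H : lmodType C) (ipV : V -> V -> C) (ipH : H -> H -> C).
Hypotheses (hV : is_hilbert ipV) (hH : is_hilbert ipH).
Variable i : {linear V -> H}.
Hypotheses (i_inj : injective i) (i_cpt : compact_map ipV ipH i).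
Variable a : V -> V -> C.
Hypotheses (a_sesq : sesquilinear a) (a_pos : form_positive a)
  (a_sym : form_symmetric a) (a_cont : form_continuous ipV a)
  (a_ell : form_elliptic ipV ipH i a).

Let ipV_inner : is_inner_product ipV := proj1 hV.
Let ipH_inner : is_inner_product ipH := proj1 hH.

Definition ipi u v := ipH (i u) (i v).

Lemma ipi_herm : hermitian_form ipi.
Proof.
split=> [c x y z|x y]; rewrite /ipi; last exact: (proj2 (ip_hermitian ipH_inner)).
by rewrite linearD linearZ (proj1 (ip_hermitian ipH_inner)).
Qed.

Lemma a_herm : hermitian_form a.
Proof. by split; [case: a_sesq | exact: a_sym]. Qed.

Local Notation qH := (qform ipi).
Local Notation qa := (qform a).
Local Notation qV := (qform ipV).

Lemma qH_ge0 u : 0 <= qH u. Proof. exact: (qform_ip_ge0 ipH_inner). Qed.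

Lemma qa_ge0 u : 0 <= qa u. Proof. exact: lec_Re (a_pos u). Qed.

Lemma qV_ge0 u : 0 <= qV u. Proof. exact: (qform_ip_ge0 ipV_inner). Qed.

Lemma qH_gt0 u : u <> 0 -> 0 < qH u.
Proof.
move=> u_neq0; rewrite lt_neqAle qH_ge0 andbT; apply/eqP => q0; apply: u_neq0.
by apply: i_inj; rewrite linear0; apply: (qform_ip_eq0 ipH_inner); exact: esym q0.
Qed.

Lemma qH_normalize w : w <> 0 -> qH (cR (Num.sqrt (qH w))^-1 *: w) = 1.
Proof. by move=> /qH_gt0 qw_gt0; rewrite (qform_normalize ipi_herm) // divff ?gt_eqF. Qed.

Lemma ipi_eigen_qa u (nu : R) : a u u = cR nu * ipi u u -> qa u = nu * qH u.
Proof. by rewrite /qform => ->; rewrite ReMcR. Qed.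

Lemma qa_elliptic : exists omega delta : R, [/\ 0 < omega, 0 < delta &
  forall u, delta * qV u <= qa u + omega * qH u].
Proof.
case: a_ell => om [de [om_gt0 [de_gt0 ell]]]; exists om, de; split => // u.
by have := lec_Re (ell u); rewrite cReD /= (hnorm_sqr ipV_inner) (hnorm_sqr ipH_inner).
Qed.

Lemma qa_bounded : exists2 M : R, 0 < M & forall u, qa u <= M * qV u.
Proof.
case: a_cont => M bound; exists (`|M| + 1) => [|u]; first by rewrite ltr_pwDr.
have qa_le : qa u <= M * qV u.
  apply: le_trans (Re_le_normc _) _; apply: le_trans (bound u u) _.
  by rewrite -mulrA -expr2 (hnorm_sqr ipV_inner).
by apply: le_trans qa_le (ler_wpM2r (qV_ge0 u) _); rewrite (le_trans (ler_norm M)) ?lerDl.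
Qed.

Lemma compact_embedding_subseq (w : nat -> V) (M : R) : (forall n, qV (w n) <= M) ->
  exists (phi : nat -> nat) (l : H), (forall n, (phi n < phi n.+1)%N) /\
    forall eta, 0 < eta -> exists N, forall n, (N <= n)%N ->
      qform ipH (i (w (phi n)) - l) < eta.
Proof.
move=> bounded; have bounded_w : hbounded ipV w.
  exists (Num.sqrt M) => n; rewrite ler_sqrt ?(bounded n) //.
  exact: le_trans (qV_ge0 _) (bounded n).
have [phi [l [incr cvg]]] := i_cpt bounded_w.
by exists phi, l; split => //; apply: hconverges_qform.
Qed.

(* A V-bounded sequence whose H-norms blow up would have no H-convergent
   subsequence, contradicting compactness of [i]. *)
Lemma qH_bounded : exists2 M : R, 0 < M & forall u, qH u <= M * qV u.
Proof.
apply: contrapT => unbounded.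
have /choice [u large] : forall n : nat, exists u, n.+1%:R * qV u < qH u.
  move=> n; apply: contrapT => none; apply: unbounded; exists n.+1%:R => // u.
  by rewrite leNgt; apply/negP => lt_u; apply: none; exists u.
have qVu_gt0 n : 0 < qV (u n).
  rewrite lt_neqAle qV_ge0 andbT; apply/eqP => q0; have := large n.
  by rewrite -q0 (qform_ip_eq0 ipV_inner (esym q0)) (qform0 ipi_herm) mulr0 ltxx.
pose w n := cR (Num.sqrt (qV (u n)))^-1 *: u n.
have qVw n : qV (w n) = 1.
  by rewrite (qform_normalize (ip_hermitian ipV_inner)) // divff ?gt_eqF.
have qHw n : n.+1%:R < qH (w n).
  by rewrite (qform_normalize ipi_herm) // ltr_pdivlMr.
have w_bounded n : qV (w n) <= 1 by rewrite qVw.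
have [phi [l [incr cvg]]] := compact_embedding_subseq w_bounded.
have [N close] := cvg 1 ltr01.
have [n [le_Nn large_n]] : exists n, (N <= n)%N /\ 2 + 2 * qform ipH l < n%:R.
  exists (maxn N (Num.truncn (2 + 2 * qform ipH l)).+1); rewrite leq_maxl.
  by split => //; apply: lt_le_trans (truncnS_gt _) _; rewrite ler_nat leq_maxr.
have := qformD_le ipH_inner (i (w (phi n)) - l) l; rewrite subrK.
have := qHw (phi n); have := close n le_Nn.
have : (n%:R : R) <= (phi n).+1%:R by rewrite ler_nat ltnW // ltnS leq_incr.
lra.
Qed.

Lemma bounded_subseq_cauchyH (w : nat -> V) (M : R) : (forall n, qV (w n) <= M) ->
  exists phi : nat -> nat, (forall n, (phi n < phi n.+1)%N) /\
    forall e, 0 < e -> exists N, forall n m, (N <= n)%N -> (N <= m)%N ->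
      qH (w (phi n) - w (phi m)) < e.
Proof.
move=> /compact_embedding_subseq [phi [l [incr cvg]]]; exists phi; split => // e e_gt0.
have [N close] : exists N, forall n, (N <= n)%N -> qform ipH (i (w (phi n)) - l) < e / 4.
  by apply: cvg; rewrite divr_gt0.
exists N => n m le_Nn le_Nm; rewrite /qform /ipi linearB.
have -> : i (w (phi n)) - i (w (phi m)) =
  (i (w (phi n)) - l) - (i (w (phi m)) - l) by rewrite opprB addrA subrK.
apply: le_lt_trans (qformB_le ipH_inner _ _) _.
by have := close _ le_Nn; have := close _ le_Nm; lra.
Qed.

Definition orth (f : nat -> V) (k : nat) (v : V) := forall l, (l < k)%N -> ipi v (f l) = 0.

Lemma orth_subspace f k : subspace (orth f k).
Proof.
split=> [l _|c x y ox oy l lt_lk]; first by rewrite (herm0l ipi_herm).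
by rewrite (proj1 ipi_herm) ox // oy // mulr0 addr0.
Qed.

Lemma orth_ext f g k v : (forall l, (l < k)%N -> f l = g l) -> orth f k v -> orth g k v.
Proof. by move=> eq_fg ov l lt_lk; rewrite -eq_fg // ov. Qed.

Lemma orth_le f l m v : (l <= m)%N -> orth f m v -> orth f l v.
Proof. by move=> le_lm ov q lt_ql; apply: ov; apply: leq_trans lt_ql le_lm. Qed.

Definition rayleigh_min f k v :=
  [/\ orth f k v, qH v = 1 & forall w, orth f k w -> qa v * qH w <= qa w].

Lemma rayleigh_min_ext f g k v :
  (forall l, (l < k)%N -> f l = g l) -> rayleigh_min f k v -> rayleigh_min g k v.
Proof.
move=> eq_fg [ov qv minv]; split => //; first exact: orth_ext ov.
by move=> w /(orth_ext (fun l lt_lk => esym (eq_fg l lt_lk))); apply: minv.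
Qed.

Lemma rayleigh_inf f k : (exists2 w, orth f k w & w <> 0) ->
  exists mu : R, [/\ 0 <= mu, forall w, orth f k w -> mu * qH w <= qa w
    & forall n : nat, exists v, [/\ orth f k v, qH v = 1 & qa v < mu + n.+1%:R^-1]].
Proof.
move=> [w0 orth_w0 w0_neq0].
pose E : set R := fun r => exists v, [/\ orth f k v, qH v = 1 & r = qa v].
have normal w : orth f k w -> w <> 0 -> E (qa (cR (Num.sqrt (qH w))^-1 *: w)).
  move=> ow w_neq0; exists (cR (Num.sqrt (qH w))^-1 *: w).
  by split; [exact: subspaceZ (orth_subspace f k) _ _ ow | exact: qH_normalize |].
have E_lb : lbound E 0 by move=> r [v [_ _ ->]]; exact: qa_ge0.
have E_inf : has_inf E.
  by split; [exists (qa (cR (Num.sqrt (qH w0))^-1 *: w0)); exact: normal | exists 0].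
exists (inf E); split.
- by apply: lb_le_inf => //; case: E_inf.
- move=> w ow; have [->|w_neq0] := pselect (w = 0).
    by rewrite (qform0 ipi_herm) (qform0 a_herm) mulr0.
  have := ge_inf (proj2 E_inf) (normal w ow w_neq0).
  by rewrite (qform_normalize a_herm) ?qH_gt0 // ler_pdivlMr ?qH_gt0.
- move=> n; have := @inf_adherent R E (n.+1%:R)^-1; rewrite invr_gt0 ltr0Sn.
  by case/(_ isT E_inf) => r [v [ov qv ->]] close; exists v.
Qed.

(* Parallelogram law: two almost-minimizers are V-close once they are H-close. *)
Lemma minimizing_seq_cauchy f k (mu : R) (v : nat -> V) : 0 <= mu ->
  (forall w, orth f k w -> mu * qH w <= qa w) ->
  (forall n, orth f k (v n)) -> (forall n, qH (v n) = 1) ->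
  (forall n, qa (v n) < mu + n.+1%:R^-1) ->
  (forall e, 0 < e -> exists N, forall n m, (N <= n)%N -> (N <= m)%N ->
     qH (v n - v m) < e) ->
  hcauchy ipV v.
Proof.
move=> mu_ge0 lb ov qHv qav cauchyH e e_gt0.
have [om [de [om_gt0 de_gt0 ell]]] := qa_elliptic.
pose T := de * e ^+ 2 / 4.
have T_gt0 : 0 < T by rewrite /T divr_gt0 ?mulr_gt0 ?exprn_gt0.
have mo_gt0 : 0 < mu + om + 1 by lra.
have [N1 close] := cauchyH _ (divr_gt0 T_gt0 mo_gt0).
have [N2 small] := invSn_small (divr_gt0 T_gt0 (ltr0Sn R 1)).
exists (maxn N1 N2) => n m; rewrite !geq_max => /andP [n1 n2] /andP [m1 m2].
apply: (hnorm_lt_sqr ipV_inner e_gt0).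
rewrite -(ltr_pM2l de_gt0) (_ : de * e ^+ 2 = 4 * T); last first.
  by rewrite /T [RHS]mulrC divfK ?pnatr_eq0.
have := close n m n1 m1; rewrite ltr_pdivlMr //.
have := qform_parallelogram a_herm (v n) (v m).
have := qform_parallelogram ipi_herm (v n) (v m); rewrite !qHv.
have := lb _ (subspaceD (orth_subspace f k) (ov n) (ov m)); have := ell (v n - v m).
have := qH_ge0 (v n - v m); have := qa_ge0 (v n + v m).
have := small n n2; have := small m m2; have := qav n; have := qav m.
move: (n.+1%:R^-1 : R) (m.+1%:R^-1 : R) => xn xm.
move: (qH (v n - v m)) (qH (v n + v m)) => hd hs.
nra.
Qed.

Lemma exists_rayleigh_min f k : (exists2 w, orth f k w & w <> 0) ->
  exists v, rayleigh_min f k v.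
Proof.
move=> /rayleigh_inf [mu [mu_ge0 lb /choice [v approx]]].
have ov n : orth f k (v n) by case: (approx n).
have qHv n : qH (v n) = 1 by case: (approx n).
have qav n : qa (v n) < mu + n.+1%:R^-1 by case: (approx n).
have [om [de [om_gt0 de_gt0 ell]]] := qa_elliptic.
have bounded n : qV (v n) <= (mu + 1 + om) / de.
  rewrite ler_pdivlMr // mulrC; have := ell (v n); rewrite qHv mulr1.
  have : qa (v n) < mu + 1.
    by apply: lt_le_trans (qav n) _; rewrite lerD2l invf_le1 ?ler1n ?ltr0Sn.
  lra.
have [phi [incr cauchyH]] := bounded_subseq_cauchyH bounded.
have qav_phi n : qa (v (phi n)) < mu + n.+1%:R^-1.
  by apply: lt_le_trans (qav (phi n)) _; rewrite lerD2l invSn_le // leq_incr.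
have [lim cvg] := proj2 hV _ (minimizing_seq_cauchy mu_ge0 lb
  (fun n => ov (phi n)) (fun n => qHv (phi n)) qav_phi cauchyH).
have [MH MH_gt0 qH_dom] := qH_bounded.
have [Ma Ma_gt0 qa_dom] := qa_bounded.
have olim : orth f k lim.
  move=> l lt_lk; apply: (form_cvg_eq0 ipV_inner ipi_herm qH_ge0 MH_gt0 qH_dom cvg).
  by move=> n; apply: ov.
have qHlim : qH lim = 1.
  apply/eqP; rewrite eq_sym -subr_eq0; apply/eqP; apply: small_norm_eq0 => e.
  case/(qform_cvg ipV_inner ipi_herm qH_ge0 MH_gt0 qH_dom cvg) => N close.
  by have := close N (leqnn N); rewrite qHv.
have qalim : qa lim <= mu.
  rewrite -subr_le0; apply: small_le0 => e e_gt0.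
  have e2_gt0 : 0 < e / 2 by rewrite divr_gt0.
  have [N1 close] := qform_cvg ipV_inner a_herm qa_ge0 Ma_gt0 qa_dom cvg e2_gt0.
  have [N2 small] := invSn_small e2_gt0.
  have := close _ (leq_maxl N1 N2); have := small _ (leq_maxr N1 N2).
  have := qav_phi (maxn N1 N2); move: ((maxn N1 N2).+1%:R^-1 : R) => x.
  by rewrite ler_norml => ? ? /andP [? ?]; lra.
exists lim; split => // w ow.
have := lb _ olim; rewrite qHlim mulr1 => mu_le.
have -> : qa lim = mu by apply/eqP; rewrite eq_le qalim mu_le.
exact: lb.
Qed.

Definition orthonormal (f : nat -> V) (k : nat) :=
  forall l m, (l < k)%N -> (m < k)%N -> ipi (f l) (f m) = (l == m)%:R.

Lemma sum_delta k (c : 'I_k -> C) (m : 'I_k) :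
  \sum_(l < k) c l * (l == m)%:R = c m.
Proof.
by rewrite (bigD1 m) //= eqxx mulr1 big1 ?addr0 // => l /negPf ->; rewrite mulr0.
Qed.

Lemma orth_decomp f k x : orthonormal f k ->
  orth f k (x - \sum_(l < k) ipi x (f l) *: f l).
Proof.
move=> onf m lt_mk; rewrite (hermBl ipi_herm) (herm_suml ipi_herm).
rewrite (eq_bigr (fun l : 'I_k => ipi x (f l) * (l == Ordinal lt_mk)%:R)).
  by rewrite sum_delta subrr.
by move=> l _; rewrite onf.
Qed.

Definition a_eigen u (nu : R) := forall x, a u x = cR nu * ipi u x.

Lemma a_eigen_subspace mu : subspace (a_eigen ^~ mu).
Proof.
split=> [v|c x y ex ey v]; first by rewrite (herm0l a_herm) (herm0l ipi_herm) mulr0.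
by rewrite (proj1 a_herm) (proj1 ipi_herm) ex ey; ring.
Qed.

Local Notation b := (bform ipH i a).

Lemma bformE mu u v : b mu u v = a u v - cR mu * ipi u v.
Proof. by []. Qed.

Lemma bform_herm mu : hermitian_form (b mu).
Proof.
split=> [c x y z|x y]; rewrite !bformE.
  by rewrite (proj1 a_herm) (proj1 ipi_herm); ring.
by rewrite (proj2 a_herm) (proj2 ipi_herm) cconjD cconjN cconjM cconjR.
Qed.

Lemma qform_bform mu x : qform (b mu) x = qa x - mu * qH x.
Proof. by rewrite /qform bformE cReB ReMcR. Qed.

(* Euler-Lagrange equation of the constrained Rayleigh quotient. *)
Lemma rayleigh_eigen f k mu w : orthonormal f k ->
  (forall l, (l < k)%N -> a_eigen (f l) (qa (f l))) ->
  (forall y, orth f k y -> mu * qH y <= qa y) ->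
  orth f k w -> qa w = mu * qH w -> a_eigen w mu.
Proof.
move=> onf eigf lb ow qaw x; apply/eqP; rewrite -subr_eq0; apply/eqP.
have null y : orth f k y -> b mu w y = 0.
  move=> oy; rewrite (proj2 (bform_herm mu)).
  rewrite (psd_null_orth (bform_herm mu) (orth_subspace f k)) ?cconj0 //.
    by move=> z oz; rewrite qform_bform subr_ge0 lb.
  by rewrite qform_bform qaw subrr.
have b_eigf l : (l < k)%N -> b mu w (f l) = 0.
  move=> lt_lk; rewrite (proj2 (bform_herm mu)) bformE eigf // -mulrBl.
  by rewrite (proj2 ipi_herm) ow // cconj0 mulr0 cconj0.
pose y := x - \sum_(l < k) ipi x (f l) *: f l.
have -> : x = y + \sum_(l < k) ipi x (f l) *: f l by rewrite subrK.
rewrite -bformE (hermDr (bform_herm mu)) (null y (orth_decomp x onf)) add0r.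
by rewrite (herm_sumr (bform_herm mu)) big1 // => l _; rewrite b_eigf // mulr0.
Qed.

(* m + 1 independent vectors cannot all be excluded by m orthogonality
   constraints: the constraint matrix has a nontrivial kernel. *)
Lemma exists_orth_comb m (x : 'I_m.+1 -> V) (f : nat -> V) : lin_indep x ->
  exists c : 'I_m.+1 -> C, \sum_(p < m.+1) c p *: x p <> 0 /\
    orth f m (\sum_(p < m.+1) c p *: x p).
Proof.
move=> x_indep; pose M : 'M[C]_(m.+1, m) := \matrix_(p, q) ipi (x p) (f q).
have kerM_neq0 : kermx M != 0.
  by rewrite -mxrank_eq0 mxrank_ker subn_eq0 -ltnNge ltnS rank_leq_col.
have [r [q kerM_rq]] : exists r q, kermx M r q != 0.
  apply: contrapT => all0; move/eqP: kerM_neq0; apply; apply/matrixP => r q.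
  by rewrite [RHS]mxE; apply: contrapT => nz; apply: all0; exists r, q; apply/eqP.
pose d := row r (kermx M).
have dM : d *m M = 0 by rewrite /d -row_mul mulmx_ker row0.
exists (fun p => d 0 p); split.
  by move=> /x_indep /(_ q); rewrite /d mxE => d0; rewrite d0 eqxx in kerM_rq.
move=> l lt_lm; rewrite (herm_suml ipi_herm).
have := congr1 (fun A : 'rV_m => A 0 (Ordinal lt_lm)) dM; rewrite /= !mxE => sum0.
by rewrite -[RHS]sum0; apply: eq_bigr => p _; rewrite !mxE.
Qed.

(* An H-orthonormal sequence has no H-convergent subsequence, so by compactness
   of [i] it cannot be bounded in V. *)
Lemma orthonormal_qa_unbounded (e : nat -> V) (B : R) :
  (forall l m, ipi (e l) (e m) = (l == m)%:R) -> ~ (forall k, qa (e k) <= B).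
Proof.
move=> onf bounded; have [om [de [om_gt0 de_gt0 ell]]] := qa_elliptic.
have qH1 k : qH (e k) = 1 by rewrite /qform onf eqxx.
have qV_bounded k : qV (e k) <= (B + om) / de.
  rewrite ler_pdivlMr // mulrC; apply: le_trans (ell _) _.
  by rewrite qH1 mulr1 lerD2r.
have [phi [incr cauchyH]] := bounded_subseq_cauchyH qV_bounded.
have [N close] := cauchyH 1 ltr01; have := close N N.+1 (leqnn _) (leqnSn _).
rewrite (qformB ipi_herm) !qH1 onf (ltn_eqF (incr N)) /=.
lra.
Qed.

(* [mu qH z - qa z] is the squared H-norm of a rescaled combination. *)
Lemma qa_comb_le m (w : 'I_m -> V) (nu : 'I_m -> R) (mu : R) (c : 'I_m -> C) :
  (forall p q, a (w p) (w q) = cR (nu p) * ipi (w p) (w q)) -> (forall p, nu p <= mu) ->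
  qa (\sum_(p < m) c p *: w p) <= mu * qH (\sum_(p < m) c p *: w p).
Proof.
move=> eig le_mu.
pose sq p := Num.sqrt (mu - nu p).
have sq_sqr p : sq p ^+ 2 = mu - nu p by rewrite sqr_sqrtr // subr_ge0.
have eq_nu p q : ipi (w p) (w q) != 0 -> nu p = nu q.
  move=> ipi_neq0; have := eig p q; rewrite (proj2 a_herm) eig cconjM cconjR.
  rewrite -(proj2 ipi_herm) => /eqP; rewrite -subr_eq0 -mulrBl mulf_eq0.
  by rewrite (negPf ipi_neq0) orbF subr_eq0 => /eqP /cR_inj ->.
pose z := \sum_(p < m) c p *: w p.
pose zt := \sum_(p < m) (c p * cR (sq p)) *: w p.
have ipi_zt : cR mu * ipi z z - a z z = ipi zt zt.
  rewrite /z /zt !(herm_suml ipi_herm) (herm_suml a_herm) mulr_sumr -sumrB.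
  apply: eq_bigr => p _.
  rewrite !(herm_sumr ipi_herm) (herm_sumr a_herm) !mulr_sumr -sumrB.
  apply: eq_bigr => q _; rewrite eig.
  have [->|ipi_neq0] := eqVneq (ipi (w p) (w q)) 0; first by rewrite !mulr0 subrr.
  rewrite cconjM cconjR /sq -(eq_nu _ _ ipi_neq0).
  have : cR (Num.sqrt (mu - nu p)) * cR (Num.sqrt (mu - nu p)) = cR mu - cR (nu p).
    by rewrite -cRM -expr2 sq_sqr cRD cRN.
  move: (cR (Num.sqrt _)) => s ss.
  transitivity (c p * cconj (c q) * ipi (w p) (w q) * (s * s)); last by ring.
  by rewrite ss; ring.
have := qH_ge0 zt; rewrite /qform -ipi_zt cReB ReMcR -/z.
lra.
Qed.

Lemma assoc_op_eigen u (nu : R) : a_eigen u nu ->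
  assoc_op ipH i (fun _ => True) a (i u) (cR nu *: i u).
Proof.
move=> eig; exists u; split => //; last first.
  by move=> v _; rewrite eig (hermZl (ip_hermitian ipH_inner)).
exists (fun _ => i (cR nu *: u)); split; first by move=> _; exists (cR nu *: u).
move=> e e_gt0; exists 0%N => n _.
by rewrite linearZ subrr /hnorm (herm0l (ip_hermitian ipH_inner)) sqrtr0.
Qed.

Lemma assoc_op_eigenE (W : V -> Prop) y (nu : R) :
  assoc_op ipH i W a y (cR nu *: y) ->
  exists u, [/\ W u, y = i u & forall v, W v -> a u v = cR nu * ipi u v].
Proof.
case=> u [Wu -> _ eig]; exists u; split => // v Wv.
by rewrite eig // (hermZl (ip_hermitian ipH_inner)).
Qed.

Lemma eig_le_preimage (W : V -> Prop) n (mu : R) : eig_le (assoc_op ipH i W a) n mu ->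
  exists (u : 'I_n -> V) (nu : 'I_n -> R), [/\ lin_indep u, forall p, W (u p),
    forall p, nu p <= mu & forall p v, W v -> a (u p) v = cR (nu p) * ipi (u p) v].
Proof.
case=> y [y_indep y_eig].
have /fin_all_exists [nu_u spec] : forall p, exists nu_u : R * V,
    [/\ nu_u.1 <= mu, W nu_u.2, y p = i nu_u.2 &
        forall v, W v -> a nu_u.2 v = cR nu_u.1 * ipi nu_u.2 v].
  move=> p; have [nu [le_mu /assoc_op_eigenE [u [Wu yE eig]]]] := y_eig p.
  by exists (nu, u).
exists (fun p => (nu_u p).2), (fun p => (nu_u p).1); split.
- by apply: (lin_indep_preimage (g := i) _ y_indep) => p; case: (spec p).
- by move=> p; case: (spec p).
- by move=> p; case: (spec p).
- by move=> p; case: (spec p).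
Qed.

Definition rayleigh_pick (f : nat -> V) (k : nat) : V :=
  if pselect (exists v, rayleigh_min f k v) is left ex then sval (cid ex) else 0.

Lemma rayleigh_pickP f k : (exists v, rayleigh_min f k v) ->
  rayleigh_min f k (rayleigh_pick f k).
Proof. by rewrite /rayleigh_pick; case: pselect => // ex _; exact: svalP (cid ex). Qed.

(* [rayleigh_prefix k] holds the first [k] minimizers; its values at indices
   [>= k] are junk. *)
Fixpoint rayleigh_prefix (k : nat) : nat -> V :=
  if k is k'.+1 then
    fun l => if (l < k')%N then rayleigh_prefix k' l
             else rayleigh_pick (rayleigh_prefix k') k'
  else fun _ => 0.

Definition rayleigh_seq l := rayleigh_prefix l.+1 l.

Lemma rayleigh_seqE k : rayleigh_seq k = rayleigh_pick (rayleigh_prefix k) k.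
Proof. by rewrite /rayleigh_seq /= ltnn. Qed.

Lemma rayleigh_prefixE k l : (l < k)%N -> rayleigh_prefix k l = rayleigh_seq l.
Proof.
elim: k => // k IH; rewrite ltnS leq_eqVlt => /orP [/eqP ->|lt_lk] /=.
  by rewrite ltnn rayleigh_seqE.
by rewrite lt_lk IH.
Qed.

Section RayleighSequence.
Hypothesis V_infinite_dim : forall m, exists x : 'I_m -> V, lin_indep x.
Local Notation e := rayleigh_seq.

Lemma rayleigh_seq_min k : rayleigh_min e k (e k).
Proof.
have [x x_indep] := V_infinite_dim k.+1.
have [c [c_neq0 c_orth]] := exists_orth_comb e x_indep.
have [v minv] := exists_rayleigh_min (ex_intro2 _ _ _ c_orth c_neq0).
rewrite rayleigh_seqE; apply: (rayleigh_min_ext (f := rayleigh_prefix k)).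
  exact: rayleigh_prefixE.
apply: rayleigh_pickP; exists v; apply: rayleigh_min_ext minv => l lt_lk.
by rewrite rayleigh_prefixE.
Qed.

Lemma rayleigh_seq_orthonormal l m : ipi (e l) (e m) = (l == m)%:R.
Proof.
have [lt_lm|lt_ml|->] := ltngtP l m.
- by rewrite (proj2 ipi_herm); case: (rayleigh_seq_min m) => -> //; rewrite cconj0.
- by case: (rayleigh_seq_min l) => -> //.
- by rewrite (herm_diag_real ipi_herm); case: (rayleigh_seq_min m) => _ -> _.
Qed.

Lemma rayleigh_seq_eigen k : a_eigen (e k) (qa (e k)).
Proof.
elim/ltn_ind: k => k IH; case: (rayleigh_seq_min k) => ok qk mink.
apply: (rayleigh_eigen (f := e) (k := k)) => //.
- by move=> l m _ _; exact: rayleigh_seq_orthonormal.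
- by rewrite qk mulr1.
Qed.

Lemma rayleigh_seq_mono l m : (l <= m)%N -> qa (e l) <= qa (e m).
Proof.
move=> le_lm; case: (rayleigh_seq_min l) => _ _ /(_ (e m)).
case: (rayleigh_seq_min m) => om qm _; rewrite qm mulr1; apply.
exact: orth_le om.
Qed.

Lemma rayleigh_seq_nth_eig n :
  nth_eig (assoc_op ipH i (fun _ => True) a) n.+1 (qa (e n)).
Proof.
split.
  exists (fun p : 'I_n.+1 => i (e p)); split.
    move=> c sum0 q; have := congr1 (fun h => ipH h (i (e q))) sum0.
    rewrite /= (herm0l (ip_hermitian ipH_inner)) (herm_suml (ip_hermitian ipH_inner)).
    rewrite (eq_bigr (fun p : 'I_n.+1 => c p * (p == q)%:R)) ?sum_delta // => p _.
    by rewrite -/(ipi (e p) (e q)) rayleigh_seq_orthonormal.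
  move=> p; exists (qa (e p)); split; first by apply: rayleigh_seq_mono; rewrite -ltnS.
  exact: assoc_op_eigen (rayleigh_seq_eigen p).
move=> mu lt_mu /eig_le_preimage [w [nu [w_indep _ le_mu w_eig]]].
have [c [c_neq0 c_orth]] := exists_orth_comb e w_indep.
have := qa_comb_le c (fun p q => w_eig p (w q) I) le_mu.
case: (rayleigh_seq_min n) => _ _ /(_ _ c_orth) min_n.
move=> /(le_trans min_n); rewrite ler_pM2r ?qH_gt0 // => le_qa_mu.
by have := lt_le_trans lt_mu le_qa_mu; rewrite ltxx.
Qed.
End RayleighSequence.

Variables (K : lmodType C) (ipK : K -> K -> C).
Hypothesis hK : is_hilbert ipK.
Variable j : {linear V -> K}.

Lemma Nzero_form_null lam phi : Nzero ipH ipK i j a lam phi ->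
  exists u, [/\ phi = j u, forall v, j v = 0 -> b lam u v = 0 & b lam u u = 0].
Proof.
case=> _ [psi [[[u [-> bu]] _] psi0]]; exists u; split => //; last by rewrite bu psi0.
by move=> v jv0; rewrite bu jv0 (herm0r (ip_hermitian (proj1 hK))).
Qed.

Section MainArgument.
Local Notation AN := (assoc_op ipH i (fun _ => True) a).
Hypothesis no_eigvec_in_VD :
  forall (u : V) (mu : C), j u = 0 -> i u <> 0 -> ~ AN (i u) (mu *: i u).
Hypothesis Nzero_infinite_dim :
  forall lam : R, 0 < lam -> infinite_dim (hspan (Nzero ipH ipK i j a lam)).

Lemma V_infinite_dim m : exists x : 'I_m -> V, lin_indep x.
Proof.
have V_sub : subspace (fun _ : V => True) by [].
have pre psi : Nzero ipH ipK i j a 1 psi -> exists2 z : V, True & psi = j z.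
  by case/Nzero_form_null => u [-> _ _]; exists u.
have [x [x_indep _]] := infinite_dim_preimage V_sub pre (Nzero_infinite_dim ltr01) m.
by exists x.
Qed.

Local Notation e := rayleigh_seq.

Variables (n : nat) (lam : R) (u : 'I_n -> V) (nu : 'I_n -> R).
Hypotheses (u_indep : lin_indep u) (uD : forall p, j (u p) = 0)
  (le_nu_lam : forall p, nu p <= lam)
  (u_eig : forall p v, j v = 0 -> a (u p) v = cR (nu p) * ipi (u p) v).

Let orth_eigen_sub : subspace (fun z => orth e n z /\ a_eigen z lam) :=
  subspaceI (orth_subspace e n) (a_eigen_subspace lam).

Lemma D_eigenvalue_gt0 : (0 < n)%N -> 0 < lam.
Proof.
move=> n_gt0; pose k0 := Ordinal n_gt0.
have u0_neq0 : u k0 <> 0 := lin_indep_neq0 (k := k0) u_indep.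
have qa_u0 := ipi_eigen_qa (u_eig k0 (uD k0)).
have nu0_ge0 : 0 <= nu k0.
  by have := qa_ge0 (u k0); rewrite qa_u0 pmulr_lge0 ?qH_gt0.
rewrite lt_neqAle (le_trans nu0_ge0 (le_nu_lam k0)) andbT; apply/eqP => lam0.
have nu0_eq0 : nu k0 = 0 by apply/eqP; rewrite eq_le nu0_ge0 lam0 le_nu_lam.
have eig0 : a_eigen (u k0) 0.
  apply: (rayleigh_eigen (f := fun _ => 0) (k := 0)) => // [y _|].
    by rewrite mul0r qa_ge0.
  by rewrite qa_u0 nu0_eq0 !mul0r.
apply: (no_eigvec_in_VD (uD k0)) (assoc_op_eigen eig0).
by rewrite -(linear0 i) => /i_inj.
Qed.

Lemma exists_orth_comb_ext f (u0 : V) : j u0 != 0 ->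
  exists (c : 'I_n -> C) (cm : C), \sum_(q < n) c q *: u q + cm *: u0 <> 0 /\
    orth f n (\sum_(q < n) c q *: u q + cm *: u0).
Proof.
move=> ju0_neq0; pose X (p : 'I_n.+1) := if unlift ord_max p is Some q then u q else u0.
have liftE (q : 'I_n) : lift ord_max q = widen_ord (leqnSn n) q.
  by apply: val_inj; rewrite /= /bump leqNgt ltn_ord.
have sumX (c : 'I_n.+1 -> C) : \sum_(p < n.+1) c p *: X p =
    \sum_(q < n) c (widen_ord (leqnSn n) q) *: u q + c ord_max *: u0.
  rewrite big_ord_recr /= /X unlift_none; congr (_ + _).
  by apply: eq_bigr => q _; rewrite -liftE liftK.
have X_indep : lin_indep X.
  move=> c; rewrite sumX => sum0.
  have cm0 : c ord_max = 0.
    move/(congr1 j): sum0; rewrite linear0 linearD linearZ linear_sum big1 ?add0r.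
      by move/eqP; rewrite scaler_eq0 (negPf ju0_neq0) orbF => /eqP.
    by move=> q _; rewrite linearZZ uD scaler0.
  move: sum0; rewrite cm0 scale0r addr0 => /u_indep c0 p.
  by case: (unliftP ord_max p) => [q ->|->] //; rewrite liftE.
have [c [c_neq0 c_orth]] := exists_orth_comb f X_indep.
by exists (fun q => c (widen_ord (leqnSn n) q)), (c ord_max); rewrite -sumX.
Qed.

Lemma Nzero_image_orth_eigen : lam <= qa (e n) ->
  forall psi, Nzero ipH ipK i j a lam psi ->
    exists2 z, orth e n z /\ a_eigen z lam & psi = j z.
Proof.
move=> le_lam psi /Nzero_form_null [u0 [-> bu0 bu0u0]].
have [ju0|ju0_neq0] := eqVneq (j u0) 0.
  by exists 0; [exact: orth_eigen_sub.1 | rewrite ju0 linear0].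
have [c [cm [w_neq0 w_orth]]] := exists_orth_comb_ext e ju0_neq0.
set u' := \sum_(q < n) c q *: u q in w_neq0 w_orth.
set w := u' + cm *: u0 in w_neq0 w_orth.
have ju' : j u' = 0 by rewrite linear_sum big1 // => q _; rewrite linearZZ uD scaler0.
have qa_u' : qa u' <= lam * qH u' := qa_comb_le c (fun p q => u_eig p (uD q)) le_nu_lam.
have bw : qform (b lam) w = qform (b lam) u'.
  have b1 : b lam u0 u' = 0 := bu0 u' ju'.
  have b2 : b lam u' u0 = 0 by rewrite (proj2 (bform_herm lam)) b1 cconj0.
  rewrite /qform /w (hermDl (bform_herm lam)) !(hermDr (bform_herm lam)).
  rewrite !(hermZl (bform_herm lam)) !(hermZr (bform_herm lam)).
  by rewrite b1 b2 bu0u0 !mulr0 !addr0.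
have [_ _ min_n] := rayleigh_seq_min V_infinite_dim n.
have qa_w : qa w = lam * qH w.
  apply/eqP; rewrite eq_le; apply/andP; split.
    by move: bw; rewrite !qform_bform; lra.
  by apply: le_trans (min_n _ w_orth); rewrite ler_pM2r ?qH_gt0.
have w_eig : a_eigen w lam.
  apply: (rayleigh_eigen (f := e) (k := n)) => //.
  - by move=> l m _ _; exact: (rayleigh_seq_orthonormal V_infinite_dim).
  - by move=> l _; exact: (rayleigh_seq_eigen V_infinite_dim).
  - by move=> y oy; apply: le_trans (min_n _ oy); rewrite ler_wpM2r ?qH_ge0.
have cm_neq0 : cm != 0.
  apply/eqP => cm0; apply: (no_eigvec_in_VD (u := w) (mu := cR lam)).
  - by rewrite /w cm0 scale0r addr0.
  - by rewrite -(linear0 i) => /i_inj.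
  - exact: assoc_op_eigen w_eig.
exists (cm^-1 *: w); first exact: subspaceZ orth_eigen_sub _ _ (conj w_orth w_eig).
by rewrite linearZZ /w linearD ju' add0r linearZZ scalerA mulVf // scale1r.
Qed.

(* If [lam <= qa (e n)], the eigenspace of A^N for [lam] orthogonal to the
   first [n] vectors of [e] is infinite dimensional, which forces the whole
   orthonormal sequence [e] below [lam]. *)
Lemma rayleigh_seq_lt_D_eigenvalue : (0 < n)%N -> qa (e n) < lam.
Proof.
move=> n_gt0; rewrite ltNge; apply/negP => le_lam.
have Z_indep := infinite_dim_preimage orth_eigen_sub (Nzero_image_orth_eigen le_lam)
  (Nzero_infinite_dim (D_eigenvalue_gt0 n_gt0)).
apply: (orthonormal_qa_unbounded (B := lam) (rayleigh_seq_orthonormal V_infinite_dim)) => k.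
have [z [z_indep zZ]] := Z_indep k.+1.
have [c [y_neq0 y_orth]] := exists_orth_comb e z_indep.
have [_ y_eig] := subspace_sum orth_eigen_sub c zZ.
have [_ _ /(_ _ y_orth)] := rayleigh_seq_min V_infinite_dim k.
by rewrite (ipi_eigen_qa (y_eig _)) ler_pM2r ?qH_gt0.
Qed.
End MainArgument.
End Setting.

Theorem theorem2p2 (R : realType)
  (V H K : lmodType R[i])
  (ipV : V -> V -> R[i]) (ipH : H -> H -> R[i]) (ipK : K -> K -> R[i])
  (hV : is_hilbert ipV) (hH : is_hilbert ipH) (hK : is_hilbert ipK)
  (i : {linear V -> H}) (i_inj : injective i) (i_cpt : compact_map ipV ipH i)
  (j : {linear V -> K}) (j_cpt : compact_map ipV ipK j)
  (a : V -> V -> R[i])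
  (a_sesq : sesquilinear a) (a_pos : form_positive a)
  (a_sym : form_symmetric a) (a_cont : form_continuous ipV a)
  (a_ell : form_elliptic ipV ipH i a) :
  let VD := fun u : V => j u = 0 in
  let AN := assoc_op ipH i (fun _ : V => True) a in
  let AD := assoc_op ipH i VD a in
  (forall (u : V) (mu : R[i]), VD u -> i u <> 0 -> ~ AN (i u) (mu *: i u)) ->
  (forall lam : R, 0 < lam ->
     infinite_dim (hspan (Nzero ipH ipK i j a lam))) ->
  forall (n : nat) (muD : R), (1 <= n)%N -> nth_eig AD n muD ->
    exists muN : R, nth_eig AN n.+1 muN /\ muN < muD.
Proof.
move=> VD AN AD no_eigvec Nzero_inf n muD n_gt0.
case=> /(eig_le_preimage hH) [u [nu [u_indep uD le_nu u_eig]]] _.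
have V_inf := V_infinite_dim hK Nzero_inf.
exists (qform a (rayleigh_seq ipH i a n)); split.
  exact: (rayleigh_seq_nth_eig hV hH i_inj i_cpt a_sesq a_pos a_sym a_cont a_ell V_inf).
exact: (rayleigh_seq_lt_D_eigenvalue hV hH i_inj i_cpt a_sesq a_pos a_sym a_cont a_ell
  hK no_eigvec Nzero_inf u_indep uD le_nu u_eig n_gt0).
Qed.
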